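(* Let $r_1\ge\cdots\ge r_k\ge0$, let $M_1$ map $r_{1:k}=(r_1,\ldots,r_k)$ to $R_{1:k}=(R_1,\ldots,R_k)$ with $R_\tau=\sum_{j=1}^kr_j^\tau$, and let $M_2$ map $R_{1:k}$ to $t_{1:k}=(t_1,\ldots,t_k)$ defined by $t_0=1$, $t_1=R_1$, and $t_\tau=\sum_{j=1}^\tau\frac{(\tau-1)!}{(\tau-j)!}2^{j-1}R_jt_{\tau-j}$ for $\tau=2,\ldots,k$. Then: (1) The inverse $r_{1:k}=M_1^{-1}(R_{1:k})$ exists, i.e. $r_{1:k}$ is uniquely determined by $R_{1:k}$. Explicitly, let $a_k=R_1$ and $a_{k-j+1}=(R_j-\sum_{i=1}^{j-1}R_ia_{k-j+i+1})/j$ for $j=2,\ldots,k$, and let $A$ be the $k\times k$ matrix whose first $k-1$ rows are $[\,0_{k-1}\mid I_{k-1}\,]$ and whose last row is $(a_1,a_2,\ldots,a_k)$. Then $r_j$ is the $j$th largest modulus of the eigenvalues of $A$, $j=1,\ldots,k$. (2) The inverse $R_{1:k}=M_2^{-1}(t_{1:k})$ exists and is given by $R_1=t_1$ and $R_\tau=\frac{t_\tau}{(\tau-1)!2^{\tau-1}}-\sum_{j=1}^{\tau-1}\frac{t_{\tau-j}R_j}{(\tau-j)!2^{\tau-j}}$ for $\tau=2,\ldots,k$.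
   Context: $0_{k-1}$ denotes the zero column vector of length $k-1$ and $I_{k-1}$ the $(k-1)\times(k-1)$ identity matrix. In the paper, $r_1\ge\cdots\ge r_k$ are the odds of missing information $r_j=f_j/(1-f_j)$ where $f_1\ge\cdots\ge f_k$ are the eigenvalues (in $[0,1)$) of $I_{mis}I_{com}^{-1}$; $t_\tau$ is the $\tau$th moment of $\sum_j r_jU_j$ with $U_j\sim\chi^2_1$ independent. *)

From HB Require Import structures.
From mathcomp Require Import all_boot all_order all_algebra.
From mathcomp Require Import complex.
Set Implicit Arguments. Unset Strict Implicit. Unset Printing Implicit Defensive.
Import Order.TTheory GRing.Theory Num.Theory.
Local Open Scope ring_scope.

(* Indices: r : 'I_k -> R with (r i) = r_{i+1};  power sums / moments are
   functions nat -> R, only the values at 1..k matter. *)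

Section Defs.
Variable R : rcfType.

Definition powsum (k : nat) (r : 'I_k -> R) (tau : nat) : R :=
  \sum_(i < k) r i ^+ tau.

(* bseq Rs n = [:: b_1; ...; b_n] where b_j := a_{k-j+1}, so that
   b_1 = R_1 and b_j = (R_j - sum_{i=1}^{j-1} R_i b_{j-i}) / j,
   i.e. a_k = R_1, a_{k-j+1} = (R_j - sum_{i=1}^{j-1} R_i a_{k-j+i+1}) / j. *)
Fixpoint bseq (Rs : nat -> R) (n : nat) : seq R :=
  match n with
  | 0 => [::]
  | n'.+1 => let s := bseq Rs n' in
      rcons s ((Rs n - \sum_(i < n') Rs i.+1 * nth 0 s (n' - i.+1)%N) / n%:R)
  end.

(* a_m for m = 1..k  (a_m = b_{k-m+1}) ; acoef Rs k m = a_{m+1} for m : 'I_k *)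
Definition acoef (Rs : nat -> R) (k : nat) (m : 'I_k) : R :=
  nth 0 (bseq Rs k) (k - m.+1)%N.

Definition mi_matrixA (Rs : nat -> R) (k : nat) : 'M[R]_k :=
  \matrix_(i < k, j < k)
    if (i.+1 < k)%N then (j == i.+1 :> nat)%:R else acoef Rs j.

(* j-th largest (0-based index j) modulus of a list of complex numbers,
   counted with multiplicity *)
Definition jth_largest_mod (s : seq R[i]) (j : nat) : R[i] :=
  nth 0 (sort (fun x y : R[i] => y <= x) (map (fun z => `|z|) s)) j.

(* tlist Rs n = [:: t_0; ...; t_n] with t_0 = 1 and
   t_tau = sum_{j=1}^tau (tau-1)!/(tau-j)! 2^{j-1} R_j t_{tau-j}. *)
Fixpoint tlist (Rs : nat -> R) (n : nat) : seq R :=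
  match n with
  | 0 => [:: 1]
  | n'.+1 => let s := tlist Rs n' in
      rcons s (\sum_(j < n'.+1)
                 ((n'`!)%:R / ((n' - j)%N`!)%:R * 2 ^+ j * Rs j.+1
                  * nth 0 s (n' - j)%N))
  end.

Definition M2 (Rs : nat -> R) (tau : nat) : R := nth 0 (tlist Rs tau) tau.

(* Rlist t n = [:: R_1; ...; R_n] with R_1 = t_1 and
   R_tau = t_tau/((tau-1)! 2^{tau-1}) - sum_{j=1}^{tau-1} t_{tau-j} R_j/((tau-j)! 2^{tau-j}). *)
Fixpoint Rlist (t : nat -> R) (n : nat) : seq R :=
  match n with
  | 0 => [::]
  | n'.+1 => let s := Rlist t n' in
      rcons s (t n'.+1 / ((n'`!)%:R * 2 ^+ n')
               - \sum_(j < n') t (n'.+1 - j.+1)%N * nth 0 s j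
                   / (((n'.+1 - j.+1)%N`!)%:R * 2 ^+ (n'.+1 - j.+1)%N))
  end.

Definition M2inv (t : nat -> R) (tau : nat) : R := nth 0 (Rlist t tau) tau.-1.

End Defs.

From Pilot Require Import Defs.
From HB Require Import structures.
From mathcomp Require Import all_boot all_order all_algebra.
From mathcomp Require Import complex.
From mathcomp Require Import ring zify.
From Stdlib Require Import FunctionalExtensionality.
Set Implicit Arguments. Unset Strict Implicit. Unset Printing Implicit Defensive.
Import Order.TTheory GRing.Theory Num.Theory.
Local Open Scope ring_scope.

(* Part (2) is a triangular change of variables: dividing the recurrence for
   [t_(n+1)] by [n! 2^n] isolates [R_(n+1)] with coefficient 1, and the
   explicit formula for [R_(n+1)] is that recurrence solved for [R_(n+1)];
   both compositions are the identity by strong induction.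
   For part (1), the recursion defining the [a_m] is Newton's identity relating
   the power sums [R_j] of [r_1, ..., r_k] to the coefficients of
   [P = prod_j (X - r_j)], so that [a_(m+1) = - P_m].  Hence [A] is the
   companion matrix of [P], whose eigenvalues are the nonnegative reals [r_j];
   their moduli listed decreasingly are [r_1 >= ... >= r_k].  In particular the
   multiset of the [r_j] only depends on [R_1, ..., R_k], and a nonincreasing
   enumeration of a multiset is unique. *)

Lemma fact_exp2_ratio (F : numFieldType) n j : (j <= n)%N ->
  (n`!)%:R / ((n - j)`!)%:R * 2 ^+ j / ((n`!)%:R * 2 ^+ n)
    = (((n - j)`!)%:R * 2 ^+ (n - j))^-1 :> F.
Proof.
move=> le_jn.
have -> : (2 : F) ^+ n = 2 ^+ j * 2 ^+ (n - j) by rewrite -exprD subnKC.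
have fact_neq0 m : ((m`!)%:R : F) != 0 by rewrite pnatr_eq0 -lt0n fact_gt0.
have exp2_neq0 m : (2 ^+ m : F) != 0 by rewrite expf_neq0 // pnatr_eq0.
by field; rewrite ?mulf_neq0 ?fact_neq0 ?exp2_neq0.
Qed.

Lemma deriv_prod (R : comNzRingType) k (F : 'I_k -> {poly R}) :
  (\prod_(i < k) F i)^`() = \sum_(i < k) (F i)^`() * \prod_(j < k | j != i) F j.
Proof.
elim: k F => [|k IH] F; first by rewrite !big_ord0 derivC.
have neq_lift (i : 'I_k) : (widen_ord (leqnSn k) i != ord_max).
  by rewrite -val_eqE /= neq_ltn ltn_ord.
rewrite big_ord_recr /= derivM IH big_ord_recr /= mulr_suml; congr (_ + _).
  apply: eq_bigr => i _.
  rewrite [in RHS]big_mkcond big_ord_recr /= [X in _ * (_ * X)]ifT.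
    by rewrite -big_mkcond /= -mulrA.
  by rewrite eq_sym neq_lift.
rewrite mulrC [in RHS]big_mkcond big_ord_recr /= eqxx mulr1.
by congr (_ * _); apply: eq_bigr => j _; rewrite ifT.
Qed.

Lemma coef_quotXsubC (R : comNzRingType) (a : R) (P Q : {poly R}) :
  P = ('X - a%:P) * Q ->
  forall m, Q`_m = \sum_(l < size P) P`_(m.+1 + l) * a ^+ l.
Proof.
move=> PE m.
have coefP n : P`_n.+1 = Q`_n - a * Q`_n.+1.
  by rewrite PE mulrBl coefB coefXM coefCM.
have le_QP : (size Q <= size P)%N.
  have [->|Q_neq0] := eqVneq Q 0; first by rewrite size_poly0.
  by rewrite PE size_monicM ?monicXsubC // size_XsubC.
pose f l := - (Q`_(m + l) * a ^+ l).
transitivity (\sum_(0 <= l < size P) (f l.+1 - f l)); last first.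
  rewrite big_mkord; apply: eq_bigr => l _.
  by rewrite addSn coefP /f addnS exprS; ring.
rewrite telescope_sumr // /f addn0 expr0 mulr1.
have le_Qm : (size Q <= m + size P)%N := leq_trans le_QP (leq_addl m _).
by rewrite (nth_default 0 le_Qm) mul0r oppr0 add0r opprK.
Qed.

Lemma char_poly_castmx (R : comNzRingType) n m (e : n = m) (A : 'M[R]_n) :
  char_poly (castmx (e, e) A) = char_poly A.
Proof. by case: m / e; rewrite castmx_id. Qed.

Lemma nth_map_enum_ord (T : Type) (x0 : T) k (f : 'I_k -> T) (i : 'I_k) :
  nth x0 (map f (enum 'I_k)) i = f i.
Proof. by rewrite (nth_map i) ?nth_ord_enum ?size_enum_ord. Qed.

Section NonincreasingFamily.
Variables (d : Order.disp_t) (T : porderType d).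

Lemma sorted_ge_map_enum k (r : 'I_k -> T) :
  (forall i j : 'I_k, (i <= j)%N -> (r j <= r i)%O) ->
  sorted >=%O (map r (enum 'I_k)).
Proof.
move=> r_noninc; rewrite sorted_map.
apply: (@sub_sorted _ (relpre val ltn)) => [i j /ltnW /r_noninc //|].
by rewrite -sorted_map val_enum_ord iota_ltn_sorted.
Qed.

Lemma eq_nonincreasing_perm k (r r' : 'I_k -> T) :
  (forall i j : 'I_k, (i <= j)%N -> (r j <= r i)%O) ->
  (forall i j : 'I_k, (i <= j)%N -> (r' j <= r' i)%O) ->
  perm_eq (map r (enum 'I_k)) (map r' (enum 'I_k)) -> r = r'.
Proof.
move=> /sorted_ge_map_enum sorted_r /sorted_ge_map_enum sorted_r' perm_rr'.
have := sorted_eq ge_trans ge_anti sorted_r sorted_r' perm_rr'.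
move=> eq_rr'; apply: functional_extensionality => i.
by rewrite -(nth_map_enum_ord (r i) r) eq_rr' nth_map_enum_ord.
Qed.

Lemma sort_ge_perm_sorted (s1 s2 : seq T) :
  {in s1 &, forall x y, (x >=< y)%O} -> sorted >=%O s1 -> perm_eq s1 s2 ->
  sort >=%O s2 = s1.
Proof.
move=> s1_cmp sorted_s1 /perm_sort_inP <-.
- exact: (sorted_sort (@ge_trans _ T) sorted_s1).
- by move=> x y xs1 ys1; rewrite orbC; apply: s1_cmp.
- by move=> x y z _ _ _; apply: ge_trans.
- by move=> x y _ _; apply: ge_anti.
Qed.

End NonincreasingFamily.

Section MomentMap.
Variable R : rcfType.
Implicit Types (Rs t : nat -> R).

Lemma size_tlist Rs n : size (tlist Rs n) = n.+1.
Proof. by elim: n => [|n IH] //=; rewrite size_rcons IH. Qed.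

Lemma nth_tlist Rs n i : (i <= n)%N -> nth 0 (tlist Rs n) i = M2 Rs i.
Proof.
elim: n => [|n IH]; first by rewrite leqn0 => /eqP ->.
rewrite leq_eqVlt => /orP[/eqP -> // | lt_in] /=.
by rewrite nth_rcons size_tlist lt_in IH.
Qed.

Lemma M2S Rs n : M2 Rs n.+1 = \sum_(j < n.+1)
   ((n`!)%:R / ((n - j)`!)%:R * 2 ^+ j * Rs j.+1 * M2 Rs (n - j)%N).
Proof.
rewrite /M2 /= nth_rcons size_tlist ltnn eqxx; apply: eq_bigr => j _.
by rewrite nth_tlist // leq_subr.
Qed.

Lemma size_Rlist t n : size (Rlist t n) = n.
Proof. by elim: n => [|n IH] //=; rewrite size_rcons IH. Qed.

Lemma nth_Rlist t n i : (i < n)%N -> nth 0 (Rlist t n) i = M2inv t i.+1.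
Proof.
elim: n => [|n IH] //; rewrite ltnS leq_eqVlt => /orP[/eqP -> // | lt_in] /=.
by rewrite nth_rcons size_Rlist lt_in IH.
Qed.

Lemma M2invS t n : M2inv t n.+1 = t n.+1 / ((n`!)%:R * 2 ^+ n)
   - \sum_(j < n) t (n - j)%N * M2inv t j.+1 / (((n - j)`!)%:R * 2 ^+ (n - j)).
Proof.
rewrite /M2inv /= nth_rcons size_Rlist ltnn eqxx; congr (_ - _).
by apply: eq_bigr => j _; rewrite nth_Rlist // subSS.
Qed.

Lemma fact_exp2_neq0 n : (n`!)%:R * 2 ^+ n != 0 :> R.
Proof. by rewrite mulf_neq0 ?expf_neq0 ?pnatr_eq0 -?lt0n ?fact_gt0. Qed.

Lemma M2S_scaled Rs n : M2 Rs n.+1 / ((n`!)%:R * 2 ^+ n) = Rs n.+1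
   + \sum_(j < n) M2 Rs (n - j)%N * Rs j.+1 / (((n - j)`!)%:R * 2 ^+ (n - j)).
Proof.
rewrite M2S big_ord_recr /= subnn mulrDl mulr_suml addrC; congr (_ + _).
  rewrite [M2 Rs 0]/M2 /= fact0 divr1 mulr1 mulrAC mulfV ?mul1r //.
  exact: fact_exp2_neq0.
apply: eq_bigr => j _; rewrite -(fact_exp2_ratio R (ltnW (ltn_ord j))); ring.
Qed.

Lemma M2invK Rs n : (0 < n)%N -> M2inv (M2 Rs) n = Rs n.
Proof.
case: n => // n _; elim/ltn_ind: n => n IH.
rewrite M2invS.
under eq_bigr => j _ do rewrite IH //.
by rewrite M2S_scaled addrK.
Qed.

Lemma M2K t n : (0 < n)%N -> M2 (M2inv t) n = t n.
Proof.
case: n => // n _; elim/ltn_ind: n => n IH.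
apply: (mulIf (invr_neq0 (fact_exp2_neq0 n))); rewrite M2S_scaled.
have IH' (j : 'I_n) : M2 (M2inv t) (n - j)%N = t (n - j)%N.
  by rewrite -(subnSK (ltn_ord j)) IH ?subnSK ?leq_subr.
under eq_bigr => j _ do rewrite IH'.
by rewrite M2invS subrK.
Qed.

End MomentMap.

Section BSeq.
Variable R : rcfType.
Implicit Types Rs : nat -> R.

Definition bcoef Rs n := nth 0 (Defs.bseq Rs n) n.-1.

Lemma size_bseq Rs n : size (Defs.bseq Rs n) = n.
Proof. by elim: n => [|n IH] //=; rewrite size_rcons IH. Qed.

Lemma nth_bseq Rs n i : (i < n)%N -> nth 0 (Defs.bseq Rs n) i = bcoef Rs i.+1.
Proof.
elim: n => [|n IH] //; rewrite ltnS leq_eqVlt => /orP[/eqP -> // | lt_in] /=.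
by rewrite nth_rcons size_bseq lt_in IH.
Qed.

Lemma bcoefS Rs n :
  bcoef Rs n.+1 = (Rs n.+1 - \sum_(i < n) Rs i.+1 * bcoef Rs (n - i)) / n.+1%:R.
Proof.
rewrite /bcoef /= nth_rcons size_bseq ltnn eqxx; congr ((_ - _) / _).
by apply: eq_bigr => i _; rewrite nth_bseq ?subnSK //; lia.
Qed.

Lemma eq_bseq Rs Rs' n : (forall i, (0 < i <= n)%N -> Rs i = Rs' i) ->
  Defs.bseq Rs n = Defs.bseq Rs' n.
Proof.
elim: n => [|n IH] eqRs //=.
rewrite IH => [|i /andP[i_gt0 le_in]]; last by rewrite eqRs // i_gt0 ltnW.
have eqRsS (i : 'I_n.+1) : Rs i.+1 = Rs' i.+1.
  by apply: eqRs; rewrite ltnS -ltnS ltn_ord.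
rewrite (eqRsS ord_max).
by under eq_bigr => i _ do rewrite (eqRsS (widen_ord (leqnSn n) i)).
Qed.

Lemma eq_mi_matrixA Rs Rs' k : (forall i, (0 < i <= k)%N -> Rs i = Rs' i) ->
  mi_matrixA Rs k = mi_matrixA Rs' k.
Proof. by move=> eqRs; rewrite /mi_matrixA /acoef (eq_bseq eqRs). Qed.

End BSeq.

Section RootPoly.
Variables (R : rcfType) (k : nat) (r : 'I_k -> R).

Definition rootpoly : {poly R} := \prod_(i < k) ('X - (r i)%:P).

Lemma rootpolyE : rootpoly = \prod_(x <- map r (enum 'I_k)) ('X - x%:P).
Proof. by rewrite big_map big_enum. Qed.

Lemma size_rootpoly : size rootpoly = k.+1.
Proof. by rewrite rootpolyE size_prod_XsubC size_map size_enum_ord. Qed.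

Lemma monic_rootpoly : rootpoly \is monic.
Proof. exact: monic_prod_XsubC. Qed.

Lemma coef_rootpoly_deg : rootpoly`_k = 1.
Proof. by have /monicP := monic_rootpoly; rewrite lead_coefE size_rootpoly. Qed.

(* Coefficient [m] of the identity [X P' = k P + sum_i r_i P / (X - r_i)]. *)
Lemma newton_coef m :
  m%:R * rootpoly`_m = k%:R * rootpoly`_m
     + \sum_(l < k.+1) rootpoly`_(m.+1 + l) * powsum r l.+1.
Proof.
set P := rootpoly.
pose Q i := \prod_(j < k | j != i) ('X - (r j)%:P).
have PE i : P = ('X - (r i)%:P) * Q i by rewrite /P /rootpoly (bigD1 i).
have P'E : P^`() = \sum_i Q i.
  by rewrite deriv_prod; apply: eq_bigr => i _; rewrite derivXsubC mul1r.
have XP'E : 'X * P^`() = P *+ k + \sum_i (r i)%:P * Q i.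
  rewrite P'E mulr_sumr.
  transitivity (\sum_(i < k) (P + (r i)%:P * Q i)).
    by apply: eq_bigr => i _; rewrite (PE i); ring.
  by rewrite big_split /= sumr_const card_ord.
have coefXP' : ('X * P^`())`_m = m%:R * P`_m.
  rewrite coefXM; case: (m) => [|m']; first by rewrite mul0r.
  by rewrite coef_deriv /= mulr_natl.
have := congr1 (fun p : {poly R} => p`_m) XP'E.
rewrite /= coefXP' coefD coefMn coef_sum => ->.
rewrite mulr_natl -size_rootpoly /=; congr (_ + _).
under eq_bigr => i _ do rewrite coefCM (coef_quotXsubC (PE i)) mulr_sumr.
rewrite exchange_big /=; apply: eq_bigr => l _; rewrite /powsum mulr_sumr.
by apply: eq_bigr => i _; rewrite exprS; ring.
Qed.

Lemma newton_identity n : (n < k)%N ->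
  n.+1%:R * rootpoly`_(k - n.+1) =
    - \sum_(l < n.+1) rootpoly`_(k - n + l) * powsum r l.+1.
Proof.
move=> lt_nk; pose F l := rootpoly`_(k - n + l) * powsum r l.+1.
have trunc : \sum_(l < k.+1 | (l < n.+1)%N) F l = \sum_(l < k.+1) F l.
  rewrite big_mkcond; apply: eq_bigr => l _; case: ltnP => // lt_nl.
  by rewrite /F nth_default ?mul0r // size_rootpoly; lia.
have := newton_coef (k - n.+1); rewrite subnSK // natrB //.
move=> /esym/(canRL (addKr _)) sumE.
rewrite (big_ord_widen k.+1 F (ltnW lt_nk : (n.+1 <= k.+1)%N)) trunc /F sumE.
ring.
Qed.

Lemma bcoef_powsum n : (n < k)%N ->
  bcoef (powsum r) n.+1 = - rootpoly`_(k - n.+1).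
Proof.
elim/ltn_ind: n => n IH lt_nk.
have := newton_identity lt_nk.
rewrite big_ord_recr /= subnK ?coef_rootpoly_deg ?mul1r; last exact: ltnW.
have prevE (l : 'I_n) : rootpoly`_(k - n + l) = - bcoef (powsum r) (n - l).
  have lt_ln := ltn_ord l.
  by rewrite -(subnSK lt_ln) IH ?opprK; [congr (_`_ _) | ..]; lia.
under eq_bigr => l _ do rewrite prevE mulNr mulrC.
rewrite sumrN bcoefS => coefE.
have n1_neq0 : n.+1%:R != 0 :> R by rewrite pnatr_eq0.
by rewrite -(mulKf n1_neq0 rootpoly`_(k - n.+1)) coefE; ring.
Qed.

Lemma acoef_powsum (m : 'I_k) : acoef (powsum r) m = - rootpoly`_m.
Proof.
have lt_mk := ltn_ord m.
rewrite /acoef nth_bseq ?bcoef_powsum ?subnSK ?subKn //; lia.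
Qed.

Lemma mi_matrixA_companion (e : (size rootpoly).-1 = k) :
  mi_matrixA (powsum r) k = castmx (e, e) (companionmx rootpoly).
Proof.
apply/matrixP => i j; rewrite castmxE !mxE /= size_rootpoly /=.
have lt_ik := ltn_ord i.
case: ltnP => [lt_i1k | le_ki1].
  have /negPf -> : i != k.-1 :> nat by lia.
  by rewrite eq_sym.
have -> : (i == k.-1 :> nat) = true by lia.
by rewrite acoef_powsum.
Qed.

Lemma char_poly_mi_matrixA : char_poly (mi_matrixA (powsum r) k) = rootpoly.
Proof.
have e : (size rootpoly).-1 = k by rewrite size_rootpoly.
rewrite (mi_matrixA_companion e) char_poly_castmx.
exact/companionmxK/monic_rootpoly.
Qed.

End RootPoly.

Section PowerSumInverse.
Variables (R : rcfType) (k : nat).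

Lemma eq_rootpoly_powsum (r r' : 'I_k -> R) :
  (forall tau, (1 <= tau <= k)%N -> powsum r tau = powsum r' tau) ->
  rootpoly r = rootpoly r'.
Proof.
by move=> eq_ps; rewrite -!char_poly_mi_matrixA (eq_mi_matrixA eq_ps).
Qed.

Lemma nonincreasing_powsum_inj (r r' : 'I_k -> R) :
  (forall i j : 'I_k, (i <= j)%N -> r j <= r i) ->
  (forall i j : 'I_k, (i <= j)%N -> r' j <= r' i) ->
  (forall tau, (1 <= tau <= k)%N -> powsum r tau = powsum r' tau) ->
  r = r'.
Proof.
move=> r_noninc r'_noninc /eq_rootpoly_powsum.
rewrite !rootpolyE => /prod_XsubC_eq.
exact: eq_nonincreasing_perm.
Qed.

Lemma char_poly_mi_matrixA_complex (r : 'I_k -> R) :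
  char_poly (map_mx (real_complex R) (mi_matrixA (powsum r) k))
    = \prod_(x <- map (fun i => (r i)%:C%C) (enum 'I_k)) ('X - x%:P).
Proof.
rewrite -map_char_poly char_poly_mi_matrixA rmorph_prod big_map big_enum /=.
by apply: eq_bigr => i _; rewrite map_polyXsubC.
Qed.

Lemma jth_largest_mod_eigenvalues (r : 'I_k -> R) :
  (forall i j : 'I_k, (i <= j)%N -> r j <= r i) -> (forall i, 0 <= r i) ->
  forall s : seq R[i],
    char_poly (map_mx (real_complex R) (mi_matrixA (powsum r) k))
      = \prod_(z <- s) ('X - z%:P) ->
    forall j : 'I_k, jth_largest_mod s j = (r j)%:C%C.
Proof.
move=> r_noninc r_ge0 s charE j.
set L := map (fun i => (r i)%:C%C) (enum 'I_k).
have perm_Ls : perm_eq L s.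
  by apply: prod_XsubC_eq; rewrite -charE char_poly_mi_matrixA_complex.
have normL : map (fun z => `|z|) L = L.
  rewrite -map_comp; apply: eq_map => i /=.
  by rewrite ger0_norm // -(rmorph0 (real_complex R)) lecR.
have sortE : sort >=%O (map (fun z => `|z|) s) = L.
  apply: sort_ge_perm_sorted; last by rewrite -normL perm_map.
    move=> _ _ /mapP[a _ ->] /mapP[b _ ->].
    by rewrite /Order.comparable !lecR le_total.
  by apply: sorted_ge_map_enum => a b /r_noninc; rewrite lecR.
by rewrite /jth_largest_mod sortE nth_map_enum_ord.
Qed.

End PowerSumInverse.

Theorem proposition2 (R : rcfType) (k : nat) :
  (* (1) uniqueness: r_{1:k} (sorted, nonnegative) is determined by R_{1:k} *)
  (forall r r' : 'I_k -> R,
      (forall i j : 'I_k, (i <= j)%N -> r j <= r i) -> (forall i, 0 <= r i) ->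
      (forall i j : 'I_k, (i <= j)%N -> r' j <= r' i) -> (forall i, 0 <= r' i) ->
      (forall tau, (1 <= tau <= k)%N -> powsum r tau = powsum r' tau) ->
      r = r')
  /\
  (* (1) explicit inverse: r_j is the j-th largest eigenvalue modulus of A *)
  (forall r : 'I_k -> R,
      (forall i j : 'I_k, (i <= j)%N -> r j <= r i) -> (forall i, 0 <= r i) ->
      forall s : seq R[i],
        char_poly (map_mx (fun x : R => (x%:C)%C) (@mi_matrixA R (powsum r) k))
          = \prod_(z <- s) ('X - z%:P) ->
        forall j : 'I_k, jth_largest_mod s j = ((r j)%:C)%C)
  /\
  (* (2) M2 is invertible, with inverse given by the explicit formula *)
  (forall Rs : nat -> R,
      forall tau, (1 <= tau <= k)%N -> M2inv (M2 Rs) tau = Rs tau)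
  /\
  (forall t : nat -> R,
      forall tau, (1 <= tau <= k)%N -> M2 (M2inv t) tau = t tau).
Proof.
split.
  by move=> r r' r_noninc _ r'_noninc _; exact: nonincreasing_powsum_inj.
split; first exact: jth_largest_mod_eigenvalues.
by split=> [Rs | t] tau /andP[tau_gt0 _]; [exact: M2invK | exact: M2K].
Qed.
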